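(* Let $k\ge 1$ and $r\ge 2$ be integers and let $d_1\ge d_2\ge\cdots\ge d_k$ be positive integers. Then for all sufficiently large $n$, $$ex^{lin}_r\Big(n,\bigcup_{i=1}^k S^+_{d_i}\Big)\le \max_{1\le i\le k}\left\{\Big(\frac{d_i-1}{r}+\frac{i-1}{r-1}\Big)(n-i+1)+\frac{\binom{i-1}{2}}{\binom{r}{2}}\right\}.$$ Moreover, this bound is sharp asymptotically.
   Context: An $r$-uniform hypergraph is linear if every two of its hyperedges share at most one vertex. For a linear $r$-uniform hypergraph $F$, $ex^{lin}_r(n,F)$ is the maximum number of hyperedges in an $n$-vertex $r$-uniform linear hypergraph containing no copy of $F$ as a subhypergraph. $S_\ell$ denotes the star $K_{1,\ell}$ with $\ell$ edges. For a graph $F$ and $r\ge 2$, the expansion $F^+$ is the $r$-uniform hypergraph obtained from $F$ by adding $r-2$ new vertices to each edge, all added vertices being distinct. $\bigcup_{i=1}^k S^+_{d_i}$ denotes the vertex-disjoint union of $S^+_{d_1},\dots,S^+_{d_k}$. *)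

From mathcomp Require Import all_boot all_order all_algebra.
Set Implicit Arguments. Unset Strict Implicit. Unset Printing Implicit Defensive.
Import Order.TTheory GRing.Theory Num.Theory.

Definition uniform (V : finType) (r : nat) (H : {set {set V}}) : bool :=
  [forall e in H, #|e| == r].

Definition linear (V : finType) (H : {set {set V}}) : bool :=
  [forall e in H, forall f in H, (e != f) ==> (#|e :&: f| <= 1)].

Definition contains_copy (V W : finType) (F : {set {set V}}) (H : {set {set W}}) : bool :=
  [exists f : {ffun V -> W}, injectiveb f && [forall e in F, (f @: e) \in H]].

Definition ex_lin (r n : nat) (V : finType) (F : {set {set V}}) : nat :=
  \max_(H : {set {set 'I_n}} | [&& uniform r H, linear H & ~~ contains_copy F H]) #|H|.

(* Vertex type of the disjoint union of expanded stars S^+_{d_i}, i < k: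
   component i has a center (None) and, for each of its d i edges j, the r-1
   non-center vertices (Some (j,t)), t < r-1 (the leaf plus r-2 new vertices). *)
Definition star_vert (k r : nat) (d : 'I_k -> nat) : finType :=
  {i : 'I_k & option ('I_(d i) * 'I_(r.-1))}.

Definition star_edge (k r : nat) (d : 'I_k -> nat) (i : 'I_k) (j : 'I_(d i))
  : {set star_vert r d} :=
  [set @Tagged _ i (fun i => option ('I_(d i) * 'I_(r.-1))) None] :|:
  [set @Tagged _ i (fun i => option ('I_(d i) * 'I_(r.-1))) (Some (j, t)) | t : 'I_(r.-1)].

Definition star_forest (k r : nat) (d : 'I_k -> nat) : {set {set star_vert r d}} :=
  [set star_edge r (tagged x) | x : {i : 'I_k & 'I_(d i)}].

Local Open Scope ring_scope.
(* The i-th term of the bound, with 0-based index i (paper index i+1):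
   ((d_{i+1}-1)/r + i/(r-1)) (n - i) + C(i,2)/C(r,2). *)
Definition star_term (k r n : nat) (d : 'I_k -> nat) (i : 'I_k) : rat :=
  (((d i).-1)%:R / r%:R + (i : nat)%:R / (r.-1)%:R) * (n%:R - (i : nat)%:R)
  + ('C(i, 2))%:R / ('C(r, 2))%:R.

(* max over i < k of star_term; the seed 0 is harmless since, for n >= k,
   every term is >= 0 and k >= 1 (both ensured in the theorem). *)
Definition star_bound (k r n : nat) (d : 'I_k -> nat) : rat :=
  \big[Num.max/0]_(i < k) star_term r n d i.

From Pilot Require Import Defs.
From mathcomp Require Import all_boot all_order all_algebra.
Import Order.TTheory GRing.Theory Num.Theory.
From mathcomp Require Import zify ring lra.

Set Implicit Arguments. Unset Strict Implicit. Unset Printing Implicit Defensive.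

(* A vertex of huge degree can always be the
   centre of a star avoiding a bounded set, so if k vertices had huge degree, F
   could be embedded greedily: some l < k vertices have huge degree and the
   others do not.  Counting pairs of vertices inside edges, at most
   (r l (n - l) + l (l - 1)) / (r (r - 1)) edges meet these l vertices.  The
   other edges contain no packing of S^+_{d_{l+1}}, ..., S^+_{d_k}: either no
   vertex lies in d_{l+1} of them, and there are at most (d_{l+1} - 1)(n - l)/r,
   or removing one such star leads to the count for l + 1 up to a constant.
   For sharpness, put i - 1 special vertices aside and arrange the others in a
   grid.  The lines of slope s < i - 1, cut into segments of r - 1 points and
   completed by the special vertex s, and the lines of d_i - 1 further slopes,
   cut into segments of r points, form a linear hypergraph with
   ((d_i - 1)/r + (i - 1)/(r - 1)) n - o(n) edges.  It contains no F: every
   vertex lies in only d_i - 1 edges avoiding the special vertices, so each of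
   the i largest stars of F would have to meet the i - 1 special vertices. *)

(** * Counting in linear hypergraphs *)

Lemma leq_card_bigcup (T I : finType) (P : pred I) (F : I -> {set T}) :
  #|\bigcup_(i | P i) F i| <= \sum_(i | P i) #|F i|.
Proof.
elim/big_rec2: _ => [|i B s _ IH]; first by rewrite cards0.
by rewrite cardsU (leq_trans (leq_subr _ _)) // leq_add2l.
Qed.

Lemma double_counting (I J : finType) (P : pred I) (Q : pred J) (R : I -> J -> bool) :
  \sum_(i | P i) #|[set j | Q j && R i j]| = \sum_(j | Q j) #|[set i | P i && R i j]|.
Proof.
have card_sum (K L : finType) (P' : pred K) (R' : K -> L -> bool) l :
    #|[set i | P' i && R' i l]| = \sum_(i | P' i) (R' i l : nat).
  by rewrite -sum1dep_card big_mkcondr /=; apply: eq_bigr => i _; case: (R' i l).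
rewrite (eq_bigr (fun i => \sum_(j | Q j) (R i j : nat))); last first.
  by move=> i _; rewrite (card_sum _ _ Q (fun j i => R i j)).
by rewrite exchange_big /=; apply: eq_bigr => j _; rewrite card_sum.
Qed.

Lemma exists_subset_card (T : finType) (B : {set T}) m : m <= #|B| ->
  exists2 Y : {set T}, Y \subset B & #|Y| = m.
Proof.
case/card_geqP => s [us <- sB]; exists [set x in s]; last by rewrite cardsE; apply/card_uniqP.
by apply/subsetP => x; rewrite inE => /sB.
Qed.

Lemma card_offdiag (T : finType) (B : {set T}) :
  #|[set p in setX B B | p.1 != p.2]| = #|B| * #|B|.-1.
Proof.
have diagB : [set (x, x) | x in B] \subset setX B B.
  by apply/subsetP => p /imsetP [x xB ->]; rewrite in_setX xB.
have card_diag : #|[set (x, x) | x in B]| = #|B| by rewrite card_imset // => x y [].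
have -> : [set p in setX B B | p.1 != p.2] = setX B B :\: [set (x, x) | x in B].
  apply/setP => -[x y]; rewrite !inE /=; apply/andP/andP => -[h1 h2]; split => //.
    by apply/imsetP => -[z _ [xz yz]]; rewrite xz yz eqxx in h2.
  by apply: contraNneq h1 => <-; apply/imsetP; exists x => //; case/andP: h2.
have := cardsID [set (x, x) | x in B] (setX B B).
rewrite (setIidPr diagB) card_diag cardsX -subn1 mulnBr muln1; lia.
Qed.

Section Hypergraph.
Variable W : finType.
Implicit Types (H S : {set {set W}}) (A L X : {set W}) (v w : W).

Definition edges_in H A := [set e in H | e \subset A].
Definition edges_meeting H L := [set e in H | ~~ [disjoint e & L]].
Definition deg H v := #|[set e in H | v \in e]|.
Definition deg_in H A v := #|[set e in H | (v \in e) && (e \subset A)]|.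

Lemma deg_in_setT H v : deg_in H setT v = deg H v.
Proof. by apply: eq_card => e; rewrite !inE subsetT andbT. Qed.

Lemma card_edges_split H L : #|H| = #|edges_meeting H L| + #|edges_in H (~: L)|.
Proof.
rewrite -(cardsID [set e : {set W} | ~~ [disjoint e & L]] H); congr (_ + _).
  by apply: eq_card => e; rewrite !inE andbC.
by apply: eq_card => e; rewrite !inE negbK disjoints_subset andbC.
Qed.

Lemma card_edges_in_setD H A X D : {in X, forall x, deg H x <= D} ->
  #|edges_in H A| <= #|edges_in H (A :\: X)| + #|X| * D.
Proof.
move=> degX.
have cover_edges : edges_in H A \subset
    edges_in H (A :\: X) :|: \bigcup_(x in X) [set e in H | x \in e].
  apply/subsetP => e; rewrite !inE => /andP[eH eA].
  have [//|] := boolP (e \subset A :\: X); first by rewrite eH.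
  case/subsetPn => x xe; rewrite !inE (subsetP eA x xe) andbT negbK => xX.
  by rewrite andbF; apply/bigcupP; exists x; rewrite ?inE ?eH.
apply: leq_trans (subset_leq_card cover_edges) _.
rewrite cardsU (leq_trans (leq_subr _ _)) // leq_add2l.
by rewrite (leq_trans (leq_card_bigcup _ _)) // -sum_nat_const leq_sum.
Qed.

Variables (r : nat) (H : {set {set W}}).
Hypothesis unH : uniform r H.

Lemma card_edge e : e \in H -> #|e| = r.
Proof. by move=> eH; apply/eqP; exact: (forall_inP unH). Qed.

Lemma handshake A : r * #|edges_in H A| = \sum_(v in A) deg_in H A v.
Proof.
rewrite (eq_bigr (fun v => #|[set e | (e \in edges_in H A) && (v \in e)]|)); last first.
  by move=> v _; apply: eq_card => e; rewrite !inE -andbA (andbC (e \subset A)).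
rewrite -(double_counting (fun e => e \in edges_in H A) (fun v => v \in A)).
rewrite (eq_bigr (fun _ => r)) ?sum_nat_const 1?mulnC // => e; rewrite inE => /andP[eH eA].
rewrite -(card_edge eH); apply: eq_card => v; rewrite inE andb_idl //; exact: subsetP.
Qed.

Lemma card_cover_le S : S \subset H -> #|cover S| <= r * #|S|.
Proof.
move=> SH; apply: leq_trans (leq_card_cover S).1 _.
rewrite (eq_bigr (fun _ => r)) ?sum_nat_const 1?mulnC // => e eS.
exact/card_edge/(subsetP SH).
Qed.

Lemma card_edges_in_low_deg A d : {in A, forall v, deg_in H A v < d} ->
  r * #|edges_in H A| <= d.-1 * #|A|.
Proof.
move=> lowA; rewrite handshake mulnC -sum_nat_const leq_sum // => v /lowA; lia.
Qed.

Hypothesis linH : Defs.linear H.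

Lemma linear_edge_eq e f u v : e \in H -> f \in H -> u != v ->
  u \in e -> v \in e -> u \in f -> v \in f -> e = f.
Proof.
move=> eH fH uv ue ve uf vf; apply/eqP; apply: contraT => ef.
have := implyP (forall_inP (forall_inP linH e eH) f fH) ef.
have two : #|[set u; v]| <= #|e :&: f|.
  by apply/subset_leq_card/subsetP => x; rewrite !inE => /orP[]/eqP->; apply/andP.
by rewrite cards2 uv in two; move/(leq_trans two).
Qed.

Lemma card_edges_through2 u v : u != v -> #|[set e in H | (u \in e) && (v \in e)]| <= 1.
Proof.
move=> uv; apply/card_le1_eqP => e f; rewrite !inE.
by move=> /and3P[eH ue ve] /and3P[fH uf vf]; exact: (linear_edge_eq fH eH uv).
Qed.

Lemma deg_in_setD A X v : v \notin X -> deg_in H A v <= deg_in H (A :\: X) v + #|X|.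
Proof.
move=> vX.
have cover_edges : [set e in H | (v \in e) && (e \subset A)] \subset
    [set e in H | (v \in e) && (e \subset A :\: X)] :|:
    \bigcup_(x in X) [set e in H | (v \in e) && (x \in e)].
  apply/subsetP => e; rewrite !inE => /and3P[eH ve eA].
  have [//|] := boolP (e \subset A :\: X); first by rewrite eH ve.
  case/subsetPn => x xe; rewrite !inE (subsetP eA x xe) andbT negbK => xX.
  by rewrite !andbF; apply/bigcupP; exists x; rewrite ?inE ?eH ?ve.
apply: leq_trans (subset_leq_card cover_edges) _.
rewrite cardsU (leq_trans (leq_subr _ _)) // leq_add2l.
rewrite (leq_trans (leq_card_bigcup _ _)) // -sum1_card leq_sum // => x xX.
by apply: card_edges_through2; apply: contraNneq vX => ->.
Qed.

(* Each pair of distinct vertices lies in at most one edge, and an edge with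
   t >= 1 vertices in L contains t (r - t) pairs in L x ~L and t (t - 1) pairs
   in L x L, where r t (r - t) + t (t - 1) >= r (r - 1). *)
Lemma card_edges_meeting_le L :
  r * r.-1 * #|edges_meeting H L| <= r * (#|L| * (#|W| - #|L|)) + #|L| * #|L|.-1.
Proof.
set E := edges_meeting H L.
pose inside (e : {set W}) (p : W * W) := (p.1 \in e) && (p.2 \in e).
have pairs_le (Q : {set W * W}) : {in Q, forall p, p.1 != p.2} ->
    \sum_(e in E) #|[set p in Q | inside e p]| <= #|Q|.
  move=> Qoff; rewrite (double_counting (fun e => e \in E) (fun p => p \in Q) inside).
  rewrite -sum1_card leq_sum // => p pQ.
  apply: leq_trans (card_edges_through2 (Qoff p pQ)); apply: subset_leq_card.
  by apply/subsetP => e; rewrite !inE /inside => /andP[/andP[-> _] ->].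
set Q1 := setX L (~: L); set Q2 := [set p in setX L L | p.1 != p.2].
have sumQ1 : \sum_(e in E) #|[set p in Q1 | inside e p]| <= #|L| * (#|W| - #|L|).
  rewrite -(cardsC L) addKn -cardsX pairs_le // => -[x y].
  by rewrite !inE /= => /andP[xL]; apply: contraNneq => <-.
have sumQ2 : \sum_(e in E) #|[set p in Q2 | inside e p]| <= #|L| * #|L|.-1.
  by rewrite -card_offdiag pairs_le // => p; rewrite inE => /andP[].
have per_edge e : e \in E -> r * r.-1 <=
    r * #|[set p in Q1 | inside e p]| + #|[set p in Q2 | inside e p]|.
  rewrite inE => /andP[eH eL].
  have -> : [set p in Q1 | inside e p] = setX (e :&: L) (e :\: L).
    by apply/setP => -[x y]; rewrite !inE /inside /=; do ![case: (_ \in _)].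
  have -> : [set p in Q2 | inside e p] = [set p in setX (e :&: L) (e :&: L) | p.1 != p.2].
    apply/setP => -[x y]; rewrite !inE /inside /=.
    by do ![case: (_ \in _)]; rewrite /= ?andbT ?andbF.
  rewrite card_offdiag cardsX -(card_edge eH) -(cardsID L e).
  have : 0 < #|e :&: L| by rewrite card_gt0 setI_eq0.
  case: #|e :&: L| => // t _; case: #|e :\: L| => [|s]; nia.
rewrite [_ * #|E|]mulnC -sum_nat_const.
apply: leq_trans (@leq_sum _ _ (fun e => e \in E) _ _ per_edge) _.
by rewrite big_split /= -big_distrr leq_add // leq_mul2l sumQ1 orbT.
Qed.

End Hypergraph.

(** * Packings of stars *)

Section StarPacking.
Variable W : finType.
Implicit Types (H S : {set {set W}}) (A B X Z : {set W}).

(* Each star lies in what is left of A once the vertices of the earlier stars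
   are removed, so the stars are vertex-disjoint. *)
Fixpoint star_packing H A (ds : seq nat) : Prop :=
  if ds is d :: ds' then exists c S, [/\ S \subset H, #|S| = d,
    (forall e, e \in S -> (c \in e) && (e \subset A)) & star_packing H (A :\: cover S) ds']
  else True.

Lemma star_packingS H A B ds : A \subset B -> star_packing H A ds -> star_packing H B ds.
Proof.
elim: ds A B => [//|d ds IH] A B AB [c [S [SH Sd Sstar pack]]].
exists c, S; split => //; last exact: IH (setSD _ AB) pack.
by move=> e /Sstar /andP[-> eA]; exact: subset_trans AB.
Qed.

Lemma star_packing_cat H A1 A2 ds1 ds2 : [disjoint A1 & A2] ->
  star_packing H A1 ds1 -> star_packing H A2 ds2 -> star_packing H (A1 :|: A2) (ds1 ++ ds2).
Proof.
elim: ds1 A1 => [|d ds IH] A1 A12 /=; first by move=> _; apply: star_packingS; exact: subsetUr.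
case=> c [S [SH Sd Sstar pack]] pack2.
have SA1 : cover S \subset A1 by apply/bigcupsP => e /Sstar /andP[].
exists c, S; split => //.
  by move=> e /Sstar /andP[-> eA]; rewrite (subset_trans eA) ?subsetUl.
apply: star_packingS (IH _ _ pack pack2); last exact: disjointWl (subsetDl _ _) A12.
apply/subsetP => x; rewrite !inE => /orP[/andP[-> ->] //|xA2].
rewrite xA2 orbT andbT; apply: contraTN xA2 => /(subsetP SA1) xA1.
by rewrite (disjointFr A12 xA1).
Qed.

Variables (r : nat) (H : {set {set W}}).
Hypothesis unH : uniform r H.

Lemma star_packing_support A ds : star_packing H A ds ->
  exists Z, [/\ Z \subset A, #|Z| <= r * sumn ds & star_packing H Z ds].
Proof.
elim: ds A => [|d ds IH] A /=; first by exists set0; rewrite sub0set cards0.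
case=> c [S [SH Sd Sstar /IH [Z [ZAS Zcard packZ]]]].
have SA : cover S \subset A by apply/bigcupsP => e /Sstar /andP[].
exists (cover S :|: Z); split.
- by rewrite subUset SA (subset_trans ZAS) ?subsetDl.
- rewrite mulnDr (leq_trans (leq_card_setU _ _).1) // leq_add // -Sd.
  exact: leq_trans (card_cover_le unH SH) _.
- exists c, S; split => //.
    by move=> e eS; case/andP: (Sstar e eS) => -> _; rewrite subsetU // bigcup_sup.
  apply: star_packingS packZ; apply/subsetP => x xZ.
  rewrite !inE xZ orbT andbT; apply: contraTN (subsetP ZAS x xZ).
  by rewrite inE => ->.
Qed.

Lemma star_packing_cons A B w d : B \subset A -> d <= deg_in H B w ->
  exists X, [/\ X \subset B, #|X| <= r * d &
    forall ds, star_packing H (A :\: X) ds -> star_packing H A (d :: ds)].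
Proof.
move=> BA /exists_subset_card [S Sstar Sd].
have Se e : e \in S -> [&& e \in H, w \in e & e \subset B] by move/(subsetP Sstar); rewrite inE.
have SH : S \subset H by apply/subsetP => e /Se /and3P[].
exists (cover S); split.
- by apply/bigcupsP => e /Se /and3P[].
- by rewrite -Sd (card_cover_le unH SH).
move=> ds pack; exists w, S; split => // e /Se /and3P[_ -> eB].
exact: subset_trans BA.
Qed.

(* Peel off stars while some vertex has enough edges in A; once none has,
   the handshake lemma bounds what is left. *)
Lemma card_edges_in_no_packing D e ds A : ds != [::] -> all (leq^~ e) ds ->
  {in A, forall v, deg H v <= D} -> ~ star_packing H A ds ->
  r * #|edges_in H A| <= e.-1 * #|A| + size ds * (r * (r * (e * D))).
Proof.
elim: ds A => [//|d ds IH] A _ /= /andP[de alle] degA nopack.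
have [/exists_inP [w wA dw]|/exists_inPn low] :=
  boolP [exists w in A, d <= deg_in H A w]; last first.
  apply: leq_trans (leq_addr _ _); apply: leq_trans (card_edges_in_low_deg unH (d := d) _) _.
    by move=> v /low; rewrite ltnNge.
  by rewrite leq_mul2r -!subn1 leq_sub2r ?orbT.
have [X [XA Xcard pack]] := star_packing_cons (subxx A) dw.
case: ds IH alle pack nopack => [_ _ pack nopack|d' ds IH alle pack nopack].
  by case: nopack; exact: (pack [::]).
have degAX : {in A :\: X, forall v, deg H v <= D}.
  by move=> v; rewrite inE => /andP[_ /degA].
have IHX := IH (A :\: X) isT alle degAX (fun p => nopack (pack _ p)).
have dropX := card_edges_in_setD A (fun x xX => degA x (subsetP XA x xX)).
have h1 : e.-1 * #|A :\: X| <= e.-1 * #|A| by rewrite leq_mul2l subset_leq_card ?subsetDl ?orbT.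
have h2 : r * (#|X| * D) <= r * (r * (e * D)).
  by rewrite leq_mul2l mulnA leq_mul2r (leq_trans Xcard) ?orbT // leq_mul2l de orbT.
have h3 : r * #|edges_in H A| <= r * #|edges_in H (A :\: X)| + r * (#|X| * D).
  by rewrite -mulnDr leq_mul2l dropX orbT.
move: IHX h2; set K := r * (r * (e * D)) => IHX h2.
rewrite /= mulSn addnCA; apply: leq_trans h3 _; rewrite addnC; apply: leq_add h2 _.
by apply: leq_trans IHX _; rewrite leq_add2r.
Qed.

Hypotheses (linH : Defs.linear H) (r_gt0 : 0 < r).

Lemma star_packing_greedy ds (cs : seq W) A : size cs = size ds -> uniq cs ->
  {subset cs <= A} -> {in cs, forall c, size cs + r * sumn ds <= deg_in H A c} ->
  star_packing H A ds.
Proof.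
elim: ds cs A => [//|d ds IH] [//|c cs] A /= [szcs] /andP[ccs ucs] csA degcs.
set Y := [set x in cs].
have cY : c \notin Y by rewrite inE.
have dc : d <= deg_in H (A :\: Y) c.
  have := deg_in_setD linH A cY; have := degcs c (mem_head _ _).
  have : #|Y| <= size cs by rewrite cardsE card_size.
  have : d <= r * d by rewrite leq_pmull.
  lia.
have [X [XAY Xcard pack]] := star_packing_cons (subsetDl A Y) dc.
have csX x : x \in cs -> x \notin X.
  by move=> xcs; apply: contraL xcs => /(subsetP XAY); rewrite !inE => /andP[].
apply/pack/(IH cs) => //.
  by move=> x xcs; rewrite !inE csX // csA // inE xcs orbT.
move=> x xcs; have := deg_in_setD linH A (csX x xcs).
by have := degcs x; rewrite inE xcs orbT => /(_ isT); lia.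
Qed.

End StarPacking.

(** * The upper bound *)

(* r (r - 1) times the term ((d - 1)/r + l/(r - 1)) (n - l) + C(l,2)/C(r,2)
   of the bound. *)
Definition scaled_term r n d l := r.-1 * d.-1 * (n - l) + r * l * (n - l) + l * l.-1.

Lemma le_scaled_term r l n d E1 E0 :
  r * r.-1 * E1 <= r * (l * (n - l)) + l * l.-1 -> r * E0 <= d.-1 * (n - l) ->
  r * r.-1 * (E1 + E0) <= scaled_term r n d l.
Proof.
move=> h1 h2.
have : r * r.-1 * E0 <= r.-1 * (d.-1 * (n - l)).
  by rewrite (mulnC r) -mulnA leq_mul2l h2 orbT.
rewrite /scaled_term mulnDr -!mulnA; lia.
Qed.

(* Passing from l to l + 1 gains r (n - 2l - 1) in the second summand, which
   absorbs K once n is large. *)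
Lemma le_scaled_term_succ r l n e E1 E0 K : 1 < r ->
  r * r.-1 * E1 <= r * (l * (n - l)) + l * l.-1 -> r * E0 <= e.-1 * n + K ->
  2 * l + 2 + l * l + r * e * l.+1 + r * K <= n ->
  r * r.-1 * (E1 + E0) <= scaled_term r n e l.+1.
Proof.
case: r => [//|[//|s]] _ /=; rewrite /scaled_term /=.
have fe : e.-1 <= e by apply: leq_pred.
move: (e.-1) fe => f fe h1 h2 hn.
have [m nm] : exists m, n = l.+1 + m by exists (n - l.+1); lia.
subst n.
have -> : l.+1 + m - l.+1 = m by lia.
rewrite (_ : l.+1 + m - l = m.+1) in h1; last by lia.
have h3 : s.+2 * s.+1 * (E1 + E0) <= s.+2 * (l * m.+1) + l * l.-1 + s.+1 * (f * (l.+1 + m) + K).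
  have : s.+2 * s.+1 * E0 <= s.+1 * (f * (l.+1 + m) + K).
    by rewrite (mulnC s.+2) -mulnA leq_mul2l h2 orbT.
  rewrite mulnDr; lia.
apply: leq_trans h3 _.
have hm : l + 1 + l * l + s.+2 * e * l.+1 + s.+2 * K <= m by lia.
have h4 : s.+1 * f * l.+1 <= s.+2 * e * l.+1 by apply: leq_mul => //; apply: leq_mul.
have h5 : s.+1 * K <= s.+2 * K by apply: leq_mul.
clear hn h2; case: l h1 hm h4 h5 => [|l] /= h1 hm h4 h5; nia.
Qed.

Section UpperBound.
Variables (W : finType) (r : nat) (H : {set {set W}}) (k : nat) (dn : nat -> nat).
Hypotheses (linH : Defs.linear H) (unH : uniform r H) (r_gt1 : 1 < r)
  (dn_mono : forall i j, i <= j -> j < k -> dn j <= dn i)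
  (nopack : ~ star_packing H setT (mkseq dn k)).

Let ds := mkseq dn k.
Let D := 2 * r * sumn ds + k + 1.
Let K := (k + 1) * (r * (r * (dn 0 * D))).
Let high := [set v | D <= deg H v].

Let r_gt0 : 0 < r. Proof. exact: ltnW. Qed.

Let sumn_take_le l : sumn (take l ds) <= sumn ds.
Proof. by rewrite -{2}(cat_take_drop l ds) sumn_cat leq_addr. Qed.

Let sumn_drop_le l : sumn (drop l ds) <= sumn ds.
Proof. by rewrite -{2}(cat_take_drop l ds) sumn_cat leq_addl. Qed.

(* High-degree vertices could greedily be made centres of the first stars. *)
Lemma card_high_lt : #|high| < k.
Proof.
rewrite ltnNge; apply/negP => khigh; apply: nopack.
apply: (star_packing_greedy unH linH r_gt0 (cs := take k (enum high))) => //.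
- by rewrite size_takel ?size_mkseq // -cardE.
- exact/take_uniq/enum_uniq.
- by move=> c; rewrite inE.
move=> c /mem_take; rewrite mem_enum inE deg_in_setT; apply: leq_trans.
rewrite size_takel -?cardE // /D /ds; lia.
Qed.

(* Otherwise the high-degree vertices would be the centres of the first
   #|high| stars, built greedily outside the small support of the others. *)
Lemma no_packing_outside_high : ~ star_packing H (~: high) (drop #|high| ds).
Proof.
move=> /(star_packing_support unH) [Z [Zout Zcard packZ]]; apply: nopack.
have Zhigh c : c \in high -> c \notin Z.
  by move=> ch; apply: contraL ch => /(subsetP Zout); rewrite inE.
rewrite -(setUCr (~: Z)) setCK -/ds -(cat_take_drop #|high| ds).
apply: star_packing_cat _ packZ; first by rewrite disjoints_subset.
apply: (star_packing_greedy unH linH r_gt0 (cs := enum high)).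
- by rewrite size_takel -?cardE // size_mkseq ltnW // card_high_lt.
- exact: enum_uniq.
- by move=> c; rewrite mem_enum => /Zhigh; rewrite inE.
move=> c; rewrite mem_enum => ch.
have := deg_in_setD linH setT (Zhigh c ch); rewrite setTD deg_in_setT.
have := leq_mul2l r (sumn (take #|high| ds)) (sumn ds); rewrite sumn_take_le orbT.
have := leq_mul2l r (sumn (drop #|high| ds)) (sumn ds); rewrite sumn_drop_le orbT.
have := card_high_lt; move: ch Zcard; rewrite inE -cardE /D; lia.
Qed.

Let degout : {in ~: high, forall v, deg H v <= D}.
Proof. by move=> v; rewrite !inE -ltnNge => /ltnW. Qed.

Lemma card_edges_outside_high_star w : w \in ~: high ->
  dn #|high| <= deg_in H (~: high) w ->
  #|high|.+1 < k /\ r * #|edges_in H (~: high)| <= (dn #|high|.+1).-1 * #|W| + K.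
Proof.
set l := #|high|; have lk := card_high_lt => wout dw.
have [X [Xout Xcard pack]] := star_packing_cons unH (subxx (~: high)) dw.
have nopackX : ~ star_packing H (~: high :\: X) (drop l.+1 ds).
  move=> /pack; rewrite -(nth_mkseq 0 dn lk) -/ds -(drop_nth 0) ?size_mkseq //.
  exact: no_packing_outside_high.
have lk1 : l.+1 < k.
  rewrite ltn_neqAle lk andbT; apply/eqP => lk1; apply: nopackX.
  by rewrite drop_oversize // size_mkseq lk1.
split => //.
have tail_nonempty : drop l.+1 ds != [::].
  by rewrite -size_eq0 size_drop size_mkseq subn_eq0 -ltnNge.
have tail_le : all (leq^~ (dn l.+1)) (drop l.+1 ds).
  apply/allP => x; rewrite /ds /mkseq -map_drop drop_iota => /mapP [j].
  by rewrite mem_iota => /andP[lj jk] ->; apply: dn_mono; lia.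
have degoutX : {in ~: high :\: X, forall v, deg H v <= D}.
  by move=> v; rewrite inE => /andP[_ /degout].
have boundX := card_edges_in_no_packing unH tail_nonempty tail_le degoutX nopackX.
have dropX := card_edges_in_setD (~: high) (fun x xX => degout (subsetP Xout x xX)).
have e0 : dn l.+1 <= dn 0 by apply: dn_mono.
have l0 : dn l <= dn 0 by apply: dn_mono; lia.
have h1 : (dn l.+1).-1 * #|~: high :\: X| <= (dn l.+1).-1 * #|W|.
  by rewrite leq_mul2l max_card orbT.
have h2 : size (drop l.+1 ds) * (r * (r * (dn l.+1 * D))) <= k * (r * (r * (dn 0 * D))).
  rewrite leq_mul ?size_drop ?size_mkseq ?leq_subr //.
  by rewrite !leq_mul2l leq_mul2r e0 !orbT.
have h3 : r * (#|X| * D) <= r * (r * (dn 0 * D)).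
  by rewrite leq_mul2l mulnA leq_mul2r (leq_trans Xcard) ?orbT // leq_mul2l l0 orbT.
have h4 : r * #|edges_in H (~: high)| <=
    r * #|edges_in H (~: high :\: X)| + r * (#|X| * D).
  by rewrite -mulnDr leq_mul2l dropX orbT.
rewrite /K mulnDl mul1n addnA; apply: leq_trans h4 _; apply: leq_add h3.
by apply: leq_trans boundX _; apply: leq_add.
Qed.

Lemma card_edges_outside_high :
  r * #|edges_in H (~: high)| <= (dn #|high|).-1 * (#|W| - #|high|) \/
  #|high|.+1 < k /\ r * #|edges_in H (~: high)| <= (dn #|high|.+1).-1 * #|W| + K.
Proof.
have [/exists_inP [w wout dw]|/exists_inPn low] :=
  boolP [exists w in ~: high, dn #|high| <= deg_in H (~: high) w].
  by right; exact: card_edges_outside_high_star wout dw.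
have -> : #|W| - #|high| = #|~: high| by rewrite [RHS]cardsCs setCK.
left.
by apply: (card_edges_in_low_deg unH) => v /low; rewrite ltnNge.
Qed.

Definition upper_threshold := 2 * k + 2 + k * k + r * dn 0 * k + r * K.

Theorem scaled_card_edges_le : upper_threshold <= #|W| ->
  exists2 l, l < k & r * r.-1 * #|H| <= scaled_term r #|W| (dn l) l.
Proof.
move=> Wbig; set l := #|high|; have lk := card_high_lt.
have meeting : r * r.-1 * #|edges_meeting H high| <= r * (l * (#|W| - l)) + l * l.-1.
  exact: card_edges_meeting_le.
rewrite (card_edges_split H high).
case: card_edges_outside_high => [outside|[lk1 outside]].
  by exists l => //; apply: le_scaled_term.
exists l.+1 => //; apply: le_scaled_term_succ outside _ => //.
have e0 : dn l.+1 <= dn 0 by apply: dn_mono.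
apply: leq_trans Wbig; rewrite leq_add2r !leq_add ?leq_mul //; lia.
Qed.

End UpperBound.

(** * Embedding the star forest *)

Lemma star_packing_nth (W : finType) (H : {set {set W}}) (x0 : W) ds A :
  star_packing H A ds -> exists (cs : seq W) (Ss : seq {set {set W}}),
  (forall j, j < size ds -> [/\ nth set0 Ss j \subset H, #|nth set0 Ss j| = nth 0 ds j,
      {in nth set0 Ss j, forall e : {set W}, nth x0 cs j \in e} &
      cover (nth set0 Ss j) \subset A]) /\
  (forall j1 j2, j1 < size ds -> j2 < size ds -> j1 != j2 ->
      [disjoint cover (nth set0 Ss j1) & cover (nth set0 Ss j2)]).
Proof.
elim: ds A => [|d ds IH] A /=; first by exists [::], [::].
case=> c [S [SH Sd Sstar /IH [cs [Ss [stars disj]]]]].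
have SA : cover S \subset A by apply/bigcupsP => e /Sstar /andP[].
have disjS j : j < size ds -> [disjoint cover S & cover (nth set0 Ss j)].
  move=> jds; have [_ _ _ SjA] := stars j jds.
  rewrite disjoint_sym disjoints_subset (subset_trans SjA) //.
  by apply/subsetP => x; rewrite !inE => /andP[].
exists (c :: cs), (S :: Ss); split.
  case=> [|j] /= jds; first by split => // e /Sstar /andP[].
  have [SjH Sjd Sjc SjA] := stars j jds; split => //.
  exact: subset_trans SjA (subsetDl _ _).
case=> [|j1] [|j2] //= j1ds j2ds ne; [exact: disjS | | exact: disj].
by rewrite disjoint_sym disjS.
Qed.

Section Embedding.
Variables (W : finType) (k r : nat) (d : 'I_k -> nat) (H : {set {set W}}) (x0 : W).
Variables (centre : 'I_k -> W) (star : 'I_k -> {set {set W}}).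
Hypotheses (linH : Defs.linear H) (unH : uniform r H) (d_gt0 : forall i, 0 < d i)
  (starH : forall i, star i \subset H) (card_star : forall i, #|star i| = d i)
  (centre_in : forall i e, e \in star i -> centre i \in e)
  (star_disj : forall i i', i != i' -> [disjoint cover (star i) & cover (star i')]).

Local Notation hub i := (@Tagged _ i (fun i => option ('I_(d i) * 'I_(r.-1))) None).
Local Notation leaf i j t :=
  (@Tagged _ i (fun i => option ('I_(d i) * 'I_(r.-1))) (Some (j, t))).


Definition star_edge_at (i : 'I_k) (j : nat) : {set W} := nth set0 (enum (star i)) j.

Lemma star_edge_at_mem i (j : 'I_(d i)) : star_edge_at i j \in star i.
Proof. by rewrite /star_edge_at -mem_enum mem_nth // -cardE card_star. Qed.

Lemma star_edge_at_H i (j : 'I_(d i)) : star_edge_at i j \in H.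
Proof. exact: subsetP (starH i) _ (star_edge_at_mem j). Qed.

Lemma centre_in_star_edge_at i (j : 'I_(d i)) : centre i \in star_edge_at i j.
Proof. exact: centre_in (star_edge_at_mem j). Qed.

Lemma size_leaves i (j : 'I_(d i)) : size (enum (star_edge_at i j :\ centre i)) = r.-1.
Proof.
rewrite -cardE; have := cardsD1 (centre i) (star_edge_at i j).
by rewrite centre_in_star_edge_at (card_edge unH (star_edge_at_H j)); lia.
Qed.

Lemma star_edge_at_inj i : injective (fun j : 'I_(d i) => star_edge_at i j).
Proof.
move=> j j' /eqP; rewrite nth_uniq ?enum_uniq -?cardE ?card_star //.
by move/eqP/val_inj.
Qed.

Definition forest_map (u : star_vert r d) : W :=
  if tagged u is Some (j, t) then nth x0 (enum (star_edge_at (tag u) j :\ centre (tag u))) t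
  else centre (tag u).

Lemma forest_map_leaf i (j : 'I_(d i)) t : forest_map (leaf i j t) \in star_edge_at i j :\ centre i.
Proof. by rewrite /forest_map /= -mem_enum mem_nth // size_leaves. Qed.

Lemma forest_map_cover u : forest_map u \in cover (star (tag u)).
Proof.
case: u => i [[j t]|] /=.
  apply/bigcupP; exists (star_edge_at i j); first exact: star_edge_at_mem.
  by have := forest_map_leaf j t; rewrite inE => /andP[].
apply/bigcupP; exists (star_edge_at i (Ordinal (d_gt0 i))); first exact: star_edge_at_mem.
exact: centre_in_star_edge_at.
Qed.

Lemma forest_map_inj : injective forest_map.
Proof.
move=> u v fuv.
have tuv : tag u = tag v.
  apply/eqP; apply: contraT => /star_disj; rewrite disjoints_subset.
  by move/subsetP/(_ _ (forest_map_cover u)); rewrite inE fuv forest_map_cover.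
case: u v fuv tuv => i a [i' b] /= fuv tuv; subst i'.
case: a b fuv => [[j t]|] [[j' t']|] fuv.
- have := forest_map_leaf j t; have := forest_map_leaf j' t'; rewrite -fuv !inE.
  move=> /andP[nc' xe'] /andP[nc xe]; have jj : j = j'.
    apply: star_edge_at_inj; apply: (linear_edge_eq linH (star_edge_at_H j) (star_edge_at_H j') nc);
      by rewrite ?centre_in_star_edge_at.
  subst j'; congr Tagged; congr (Some (_, _)); apply/val_inj/eqP.
  by move: fuv; rewrite /forest_map /= => /eqP; rewrite nth_uniq ?enum_uniq ?size_leaves.
- by have := forest_map_leaf j t; rewrite fuv !inE eqxx.
- by have := forest_map_leaf j' t'; rewrite -fuv !inE eqxx.
- by [].
Qed.

Lemma forest_map_edge i (j : 'I_(d i)) : forest_map @: star_edge r j = star_edge_at i j.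
Proof.
apply/setP => x; apply/imsetP/idP.
  case=> u; rewrite /star_edge !inE => /orP[/eqP ->|/imsetP [t _ ->]] ->.
    exact: centre_in_star_edge_at.
  by have := forest_map_leaf j t; rewrite inE => /andP[].
move=> xE; have [->|xc] := eqVneq x (centre i).
  by exists (hub i); rewrite // /star_edge !inE eqxx.
have xleaf : x \in enum (star_edge_at i j :\ centre i) by rewrite mem_enum !inE xc.
have ix : index x (enum (star_edge_at i j :\ centre i)) < r.-1.
  by rewrite -(size_leaves j) index_mem.
exists (leaf i j (Ordinal ix)); last by rewrite /forest_map /= nth_index.
by rewrite /star_edge !inE; apply/orP; right; apply/imsetP; exists (Ordinal ix).
Qed.

Lemma contains_star_forest : contains_copy (star_forest r d) H.
Proof.
apply/existsP; exists (finfun forest_map); apply/andP; split.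
  by apply/injectiveP => u v; rewrite !ffunE; apply: forest_map_inj.
apply/forall_inP => e /imsetP [[i j] _ ->].
by rewrite (eq_imset _ (ffunE forest_map)) forest_map_edge star_edge_at_H.
Qed.

End Embedding.

Lemma star_packing_contains_copy (W : finType) k r (d : 'I_k.+1 -> nat) (H : {set {set W}}) :
  Defs.linear H -> uniform r H -> (forall i, 0 < d i) ->
  star_packing H setT (mkseq (fun j => d (inord j)) k.+1) -> contains_copy (star_forest r d) H.
Proof.
move=> linH unH d_gt0 pack.
have [x0 _] : exists x0 : W, True by case: pack => c _; exists c.
have [cs [Ss [stars disj]]] := star_packing_nth x0 pack; rewrite size_mkseq in stars disj.
apply: (contains_star_forest x0 (centre := fun i => nth x0 cs i)
  (star := fun i => nth set0 Ss i)) => //.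
- by move=> i; have [] := stars i (ltn_ord i).
- by move=> i; have [_ -> _ _] := stars i (ltn_ord i); rewrite nth_mkseq // inord_val.
- by move=> i e; have [_ _ he _] := stars i (ltn_ord i); apply: he.
- by move=> i i' ne; apply: disj; rewrite ?ltn_ord // (inj_eq val_inj).
Qed.

(** * The construction *)

Section FreeOfStarForest.
Variables (W : finType) (k r : nat) (d : 'I_k -> nat) (H : {set {set W}}).
Variables (U : {set W}) (i0 : 'I_k).
Hypotheses (r_gt1 : 1 < r) (d_gt0 : forall i, 0 < d i)
  (d_mono : forall i j : 'I_k, i <= j -> d j <= d i) (card_U : #|U| = i0)
  (deg_avoiding_U : forall w, #|[set e in H | (w \in e) && [disjoint e & U]]| <= (d i0).-1).

Local Notation hub i := (@Tagged _ i (fun i => option ('I_(d i) * 'I_(r.-1))) None).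
Local Notation leaf i j t :=
  (@Tagged _ i (fun i => option ('I_(d i) * 'I_(r.-1))) (Some (j, t))).


Definition component (i : 'I_k) := [set u : star_vert r d | tag u == i].

(* A copy of S^+_{d_i} avoiding U would give its centre d_i >= d_{i0} edges avoiding U. *)
Lemma copy_component_meets (f : star_vert r d -> W) (i : 'I_k) : injective f ->
  {in star_forest r d, forall e : {set star_vert r d}, f @: e \in H} -> i <= i0 ->
  exists x, (x \in U) && (x \in f @: component i).
Proof.
move=> finj fH ii0; apply/existsP; apply: contraT => /existsPn avoid.
have r1 : 0 < r.-1 by lia.
pose E := [set f @: star_edge r j | j : 'I_(d i)].
have card_E : #|E| = d i.
  rewrite card_imset ?card_ord // => j j' /(imset_inj finj) ejj'.
  have : leaf i j (Ordinal r1) \in star_edge r j'.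
    by rewrite -ejj' /star_edge !inE; apply/orP; right; apply/imsetP; exists (Ordinal r1).
  rewrite /star_edge !inE => /orP[/eqP|/imsetP [t _]]; first by move/eqP; rewrite eq_Tagged.
  by move/eqP; rewrite eq_Tagged /= => /eqP [->].
have E_avoid : E \subset [set e in H | (f (hub i) \in e) && [disjoint e & U]].
  apply/subsetP => e /imsetP [j _ ->]; rewrite !inE; apply/and3P; split.
  - by apply: fH; apply/imsetP; exists (Tagged (fun i => 'I_(d i)) j).
  - by apply/imsetP; exists (hub i); rewrite // /star_edge !inE eqxx.
  rewrite disjoints_subset; apply/subsetP => x /imsetP [u ue ->].
  rewrite inE; apply: contraTN (avoid (f u)) => fuU; rewrite negbK fuU /=.
  apply/imsetP; exists u => //; move: ue; rewrite /star_edge !inE.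
  by case/orP => [/eqP -> //|/imsetP [t _ ->]].
have := leq_trans (subset_leq_card E_avoid) (deg_avoiding_U _); rewrite card_E.
by have := d_mono ii0; have := d_gt0 i0; lia.
Qed.

(* The components 0, ..., i0 are disjoint and each meets U, but |U| = i0. *)
Lemma star_forest_free : ~~ contains_copy (star_forest r d) H.
Proof.
apply/negP => /existsP [f /andP [/injectiveP finj /forall_inP fH]].
have /fin_all_exists [g gP] : forall i : 'I_i0.+1,
    exists x, (x \in U) && (x \in f @: component (widen_ord (ltn_ord i0) i)).
  by move=> i; apply: copy_component_meets; rewrite //= -ltnS.
have ginj : injective g.
  move=> i j gij; have /andP [_ /imsetP [u ui fu]] := gP i.
  have /andP [_ /imsetP [v vj fv]] := gP j.
  have fuv : f u = f v by rewrite -fu -fv gij.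
  move: ui vj; rewrite (finj _ _ fuv) !inE => /eqP -> /eqP /(congr1 val) ij.
  exact: val_inj.
have : #|[set g i | i : 'I_i0.+1]| <= #|U|.
  by apply/subset_leq_card/subsetP => x /imsetP [i _ ->]; case/andP: (gP i).
by rewrite card_imset // card_ord card_U ltnn.
Qed.

End FreeOfStarForest.

Lemma eq_divmod w h h' j j' : j < w -> j' < w -> h * w + j = h' * w + j' -> h = h' /\ j = j'.
Proof. by move=> jw j'w e; have := edivn_eq h jw; rewrite e edivn_eq // => -[]. Qed.

Lemma eq_slope a a' b b' s s' j1 j2 k1 k2 :
  a + j1 = a' + k1 -> b + s * j1 = b' + s' * k1 ->
  a + j2 = a' + k2 -> b + s * j2 = b' + s' * k2 -> j1 != j2 -> s = s'.
Proof.
wlog lt : j1 j2 k1 k2 / j1 < j2.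
  move=> hw e1 e2 e3 e4 ne; case: (ltngtP j1 j2) => h.
  - exact: hw e1 e2 e3 e4 ne.
  - by apply: (hw j2 j1 k2 k1) => //; rewrite eq_sym.
  - by rewrite h eqxx in ne.
move=> e1 e2 e3 e4 _.
have [t et] : exists t, j2 = j1 + t.+1 by exists (j2 - j1).-1; lia.
subst j2; have ek : k2 = k1 + t.+1 by lia.
subst k2.
move: e4; rewrite !mulnDr => e4.
have : s * t.+1 = s' * t.+1 by lia.
by move/eqP; rewrite eqn_pmul2r // => /eqP.
Qed.

(* Vertices 0, ..., i0 - 1 are special and vertex i0 + x M + y is the grid
   point (x, y).  The edge of slope s in block h starting at row y1 consists of
   the points (h w + j, y1 + s j), j < w = grid_width s, together with the
   special vertex s when s < i0.  Two grid points determine the slope and the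
   edge, and a grid point lies on at most one edge of each slope. *)
Section Grid.
Variables (n i0 b r M C : nat).
Hypotheses (r_gt1 : 1 < r) (room : i0 + C * M <= n.+1) (Mbig : (i0 + b) * r <= M).

Definition grid_width s := if s < i0 then r.-1 else r.
Definition grid_vertex x y := i0 + x * M + y.
Definition grid_rows := M - (i0 + b) * r.
Definition grid_index s h y1 := [&& s < i0 + b, h < C %/ grid_width s & y1 < grid_rows].
Definition grid_segment s h y1 : {set 'I_n.+1} :=
  [set inord (grid_vertex (h * grid_width s + j) (y1 + s * j)) | j : 'I_(grid_width s)].
Definition grid_edge s h y1 : {set 'I_n.+1} :=
  (if s < i0 then [set inord s] else set0) :|: grid_segment s h y1.

Lemma grid_width_le s : grid_width s <= r.
Proof. rewrite /grid_width; case: ifP => _; lia. Qed.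

Lemma grid_index_bounds s h y1 j : grid_index s h y1 -> j < grid_width s ->
  [/\ h * grid_width s + j < C, y1 + s * j < M &
      grid_vertex (h * grid_width s + j) (y1 + s * j) < n.+1].
Proof.
move=> /and3P[sc hC yM] jw.
have hx : h * grid_width s + j < C.
  have : h.+1 * grid_width s <= C.
    by apply: leq_trans (leq_divM C (grid_width s)); rewrite leq_mul2r hC orbT.
  rewrite mulSn; lia.
have hy : y1 + s * j < M.
  have : s * j < (i0 + b) * r by apply: ltn_mul => //; apply: leq_trans jw (grid_width_le s).
  move: yM; rewrite /grid_rows; lia.
split => //; rewrite /grid_vertex.
have : (h * grid_width s + j).+1 * M <= C * M by rewrite leq_mul2r hx orbT.
rewrite mulSn; lia.
Qed.

Lemma grid_vertex_ge x y : i0 <= grid_vertex x y.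
Proof. by rewrite /grid_vertex -addnA leq_addr. Qed.

Lemma grid_vertex_inj x y x' y' : y < M -> y' < M ->
  grid_vertex x y = grid_vertex x' y' -> x = x' /\ y = y'.
Proof. by move=> yM y'M; rewrite /grid_vertex -!addnA => /addnI; exact: eq_divmod. Qed.

Lemma special_lt s : s < i0 -> s < n.+1.
Proof. lia. Qed.

Lemma mem_grid_edge s h y1 (v : 'I_n.+1) : grid_index s h y1 ->
  (v \in grid_edge s h y1) = ((s < i0) && (val v == s)) ||
  [exists j : 'I_(grid_width s), val v == grid_vertex (h * grid_width s + j) (y1 + s * j)].
Proof.
move=> sh; rewrite /grid_edge inE; congr orb.
  case: ifP => si; rewrite ?inE //.
  by rewrite -(inj_eq val_inj) /= inordK // special_lt.
apply/imsetP/existsP => [[j _ ->]|[j /eqP e]];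
  have [_ _ jn] := grid_index_bounds sh (ltn_ord j).
  by exists j; rewrite /= inordK.
by exists j => //; apply: val_inj; rewrite /= inordK.
Qed.

Lemma grid_edge_plain s h y1 (v : 'I_n.+1) : grid_index s h y1 ->
  v \in grid_edge s h y1 -> i0 <= val v ->
  exists2 j, j < grid_width s & val v = grid_vertex (h * grid_width s + j) (y1 + s * j).
Proof.
move=> sh; rewrite mem_grid_edge // => /orP[/andP[si /eqP ->]|/existsP[j /eqP e]].
  by rewrite leqNgt si.
by exists j.
Qed.

Lemma grid_edge_special s h y1 (v : 'I_n.+1) : grid_index s h y1 ->
  v \in grid_edge s h y1 -> val v < i0 -> s < i0 /\ val v = s.
Proof.
move=> sh; rewrite mem_grid_edge // => /orP[/andP[si /eqP e]|/existsP[j /eqP e]] //.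
by have := grid_vertex_ge (h * grid_width s + j) (y1 + s * j); lia.
Qed.

Lemma grid_edge_eq_plain s h y1 h' y1' (v : 'I_n.+1) :
  grid_index s h y1 -> grid_index s h' y1' ->
  v \in grid_edge s h y1 -> v \in grid_edge s h' y1' -> i0 <= val v -> h = h' /\ y1 = y1'.
Proof.
move=> sh sh' v1 v2 v_ge.
have [j jw e1] := grid_edge_plain sh v1 v_ge.
have [j' jw' e2] := grid_edge_plain sh' v2 v_ge.
have [_ yM _] := grid_index_bounds sh jw.
have [_ yM' _] := grid_index_bounds sh' jw'.
rewrite e1 in e2; have [/(eq_divmod jw jw') [-> ->] ey] := grid_vertex_inj yM yM' e2.
by split => //; lia.
Qed.

Lemma grid_edge_slope_eq s h y1 s' h' y1' (u v : 'I_n.+1) :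
  grid_index s h y1 -> grid_index s' h' y1' -> u != v ->
  u \in grid_edge s h y1 -> v \in grid_edge s h y1 ->
  u \in grid_edge s' h' y1' -> v \in grid_edge s' h' y1' -> s = s'.
Proof.
move=> sh sh' uv u1 v1 u2 v2.
have [u_lt|u_ge] := ltnP (val u) i0.
  by have [_ <-] := grid_edge_special sh u1 u_lt; have [_ ->] := grid_edge_special sh' u2 u_lt.
have [v_lt|v_ge] := ltnP (val v) i0.
  by have [_ <-] := grid_edge_special sh v1 v_lt; have [_ ->] := grid_edge_special sh' v2 v_lt.
have [j jw eu] := grid_edge_plain sh u1 u_ge; have [j' jw' eu'] := grid_edge_plain sh' u2 u_ge.
have [l lw ev] := grid_edge_plain sh v1 v_ge; have [l' lw' ev'] := grid_edge_plain sh' v2 v_ge.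
have [_ yu _] := grid_index_bounds sh jw; have [_ yu' _] := grid_index_bounds sh' jw'.
have [_ yv _] := grid_index_bounds sh lw; have [_ yv' _] := grid_index_bounds sh' lw'.
have [xu yu_eq] := grid_vertex_inj yu yu' (etrans (esym eu) eu').
have [xv yv_eq] := grid_vertex_inj yv yv' (etrans (esym ev) ev').
apply: (eq_slope xu yu_eq xv yv_eq); apply: contra_neq uv => jl; apply: val_inj.
by rewrite eu ev jl.
Qed.

Lemma grid_edge_eq_two s h y1 s' h' y1' (u v : 'I_n.+1) :
  grid_index s h y1 -> grid_index s' h' y1' -> u != v ->
  u \in grid_edge s h y1 -> v \in grid_edge s h y1 ->
  u \in grid_edge s' h' y1' -> v \in grid_edge s' h' y1' -> [/\ s = s', h = h' & y1 = y1'].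
Proof.
move=> sh sh' uv u1 v1 u2 v2; have ss' := grid_edge_slope_eq sh sh' uv u1 v1 u2 v2.
subst s'; have [u_ge|u_lt] := leqP i0 (val u).
  by have [] := grid_edge_eq_plain sh sh' u1 u2 u_ge.
have [v_ge|v_lt] := leqP i0 (val v).
  by have [] := grid_edge_eq_plain sh sh' v1 v2 v_ge.
have [_ eu] := grid_edge_special sh u1 u_lt; have [_ ev] := grid_edge_special sh v1 v_lt.
by case/eqP: uv; apply: val_inj; rewrite eu ev.
Qed.

Lemma card_grid_segment s h y1 : grid_index s h y1 -> #|grid_segment s h y1| = grid_width s.
Proof.
move=> sh; rewrite card_imset ?card_ord // => j j' /(congr1 val).
have [_ yM jn] := grid_index_bounds sh (ltn_ord j).
have [_ yM' jn'] := grid_index_bounds sh (ltn_ord j').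
by rewrite /= !inordK // => /(grid_vertex_inj yM yM') [/addnI e _]; exact: val_inj.
Qed.

Lemma card_grid_edge s h y1 : grid_index s h y1 -> #|grid_edge s h y1| = r.
Proof.
move=> sh; rewrite /grid_edge; case: ifP => si; last first.
  by rewrite set0U card_grid_segment // /grid_width si.
rewrite cardsU1 card_grid_segment // /grid_width si.
have -> : (inord s : 'I_n.+1) \notin grid_segment s h y1.
  apply/imsetP => -[j _ /(congr1 val)].
  have [_ _ jn] := grid_index_bounds sh (ltn_ord j).
  rewrite /= (inordK (special_lt si)) (inordK jn) => e.
  by have := grid_vertex_ge (h * grid_width s + j) (y1 + s * j); lia.
lia.
Qed.

Lemma grid_edge_inj s h y1 s' h' y1' : grid_index s h y1 -> grid_index s' h' y1' ->
  grid_edge s h y1 = grid_edge s' h' y1' -> [/\ s = s', h = h' & y1 = y1'].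
Proof.
move=> sh sh' e; have /card_gt1P [u [v [u1 v1 uv]]] : 1 < #|grid_edge s h y1|.
  by rewrite card_grid_edge.
by apply: (grid_edge_eq_two sh sh' uv u1 v1); rewrite -e.
Qed.

Definition special_blocks := C %/ r.-1.
Definition plain_blocks := C %/ r.
Definition special_edges :=
  [set grid_edge p.1.1 p.1.2 p.2 | p : 'I_i0 * 'I_special_blocks * 'I_grid_rows].
Definition plain_edges :=
  [set grid_edge (i0 + p.1.1) p.1.2 p.2 | p : 'I_b * 'I_plain_blocks * 'I_grid_rows].
Definition grid_hypergraph := special_edges :|: plain_edges.
Definition special_vertices : {set 'I_n.+1} := [set inord a | a : 'I_i0].

Lemma special_edge_index (p : 'I_i0 * 'I_special_blocks * 'I_grid_rows) :
  grid_index p.1.1 p.1.2 p.2.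
Proof.
case: p => [[a h] y] /=; have ai : a < i0 := ltn_ord a.
by rewrite /grid_index /grid_width ai !ltn_ord andbT ltn_addr.
Qed.

Lemma plain_edge_index (p : 'I_b * 'I_plain_blocks * 'I_grid_rows) :
  grid_index (i0 + p.1.1) p.1.2 p.2.
Proof.
case: p => [[a h] y] /=; have ai : ~~ (i0 + a < i0) by rewrite -leqNgt leq_addr.
by rewrite /grid_index /grid_width (negbTE ai) !ltn_ord ltn_add2l ltn_ord.
Qed.

Lemma grid_hypergraph_index e : e \in grid_hypergraph ->
  exists s h y1, grid_index s h y1 /\ e = grid_edge s h y1.
Proof.
rewrite inE => /orP[/imsetP [p _ ->]|/imsetP [p _ ->]].
  by exists p.1.1, p.1.2, p.2; split => //; exact: special_edge_index.
by exists (i0 + p.1.1), p.1.2, p.2; split => //; exact: plain_edge_index.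
Qed.

Lemma grid_hypergraph_uniform : uniform r grid_hypergraph.
Proof.
apply/forall_inP => e /grid_hypergraph_index [s [h [y1 [sh ->]]]].
by rewrite card_grid_edge.
Qed.

Lemma grid_hypergraph_linear : Defs.linear grid_hypergraph.
Proof.
apply/forall_inP => e eH; apply/forall_inP => f fH; apply/implyP => ef.
rewrite leqNgt; apply/negP => /card_gt1P [u [v []]].
rewrite !inE => /andP[ue uf] /andP[ve vf] uv.
have [s [h [y1 [sh ee]]]] := grid_hypergraph_index eH.
have [s' [h' [y1' [sh' ff]]]] := grid_hypergraph_index fH; subst e f.
have [es eh ey] := grid_edge_eq_two sh sh' uv ue ve uf vf.
by rewrite es eh ey eqxx in ef.
Qed.

Lemma card_special_edges : #|special_edges| = i0 * special_blocks * grid_rows.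
Proof.
rewrite card_imset; first by rewrite !card_prod !card_ord.
move=> [[a h] y] [[a' h'] y'] e.
have [/= e1 e2 e3] := grid_edge_inj (special_edge_index _) (special_edge_index _) e.
by congr (_, _, _); apply: val_inj.
Qed.

Lemma card_plain_edges : #|plain_edges| = b * plain_blocks * grid_rows.
Proof.
rewrite card_imset; first by rewrite !card_prod !card_ord.
move=> [[a h] y] [[a' h'] y'] e.
have [/= /addnI e1 e2 e3] := grid_edge_inj (plain_edge_index _) (plain_edge_index _) e.
by congr (_, _, _); apply: val_inj.
Qed.

Lemma card_grid_hypergraph :
  #|grid_hypergraph| = i0 * special_blocks * grid_rows + b * plain_blocks * grid_rows.
Proof.
rewrite cardsU card_special_edges card_plain_edges.
suff -> : special_edges :&: plain_edges = set0 by rewrite cards0 subn0.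
apply/setP => e; rewrite !inE; apply/negP => /andP[/imsetP [p _ ep] /imsetP [q _ eq]].
have [/= e1 _ _] := grid_edge_inj (special_edge_index p) (plain_edge_index q) (etrans (esym ep) eq).
by have := ltn_ord p.1.1; rewrite e1 ltnNge leq_addr.
Qed.

Lemma card_special_vertices : #|special_vertices| = i0.
Proof.
rewrite card_imset ?card_ord // => a a' /(congr1 val).
by rewrite /= !inordK ?special_lt // => e; apply: val_inj.
Qed.

Lemma grid_edge_avoiding_special e :
  e \in grid_hypergraph -> [disjoint e & special_vertices] -> e \in plain_edges.
Proof.
rewrite inE => /orP[/imsetP [p _ ->] dis|//]; exfalso.
have pn : p.1.1 < n.+1 by apply/special_lt/ltn_ord.
move: dis; rewrite disjoints_subset => /subsetP /(_ (inord p.1.1)).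
rewrite mem_grid_edge ?special_edge_index //= inordK // ltn_ord eqxx => /(_ isT).
by rewrite inE; apply/negP/negPn/imsetP; exists p.1.1.
Qed.

Lemma grid_deg_avoiding_special (w : 'I_n.+1) :
  #|[set e in grid_hypergraph | (w \in e) && [disjoint e & special_vertices]]| <= b.
Proof.
pose through (c : 'I_b) := [set e in plain_edges | (w \in e) &&
   [exists p : 'I_plain_blocks * 'I_grid_rows, e == grid_edge (i0 + c) p.1 p.2]].
have cover_slopes : [set e in grid_hypergraph | (w \in e) && [disjoint e & special_vertices]]
    \subset \bigcup_(c : 'I_b) through c.
  apply/subsetP => e; rewrite inE => /and3P[eH we /(grid_edge_avoiding_special eH) eplain].
  case/imsetP: (eplain) => p _ ep; apply/bigcupP; exists p.1.1 => //.
  by rewrite !inE eplain we; apply/existsP; exists (p.1.2, p.2); rewrite ep.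
apply: leq_trans (subset_leq_card cover_slopes) _.
apply: leq_trans (leq_card_bigcup _ _) _.
rewrite -[X in _ <= X](card_ord b) -sum1_card; apply: leq_sum => c _.
apply/card_le1_eqP => e f; rewrite !inE.
move=> /and3P[_ we /existsP [p /eqP ep]] /and3P[_ wf /existsP [q /eqP fq]]; subst e f.
have sp := plain_edge_index (c, p.1, p.2); have sq := plain_edge_index (c, q.1, q.2).
have w_ge : i0 <= val w.
  by rewrite leqNgt; apply/negP => /(grid_edge_special sp we) []; rewrite ltnNge leq_addr.
by have [-> ->] := grid_edge_eq_plain sp sq we wf w_ge.
Qed.

End Grid.

Section GridCount.
Variables (r i0 d Q n : nat).
Hypothesis r_gt1 : 1 < r.

Let b := d.-1.
Let s := r * i0 + r.-1 * b.
Let c := i0 + b.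

(* Large enough that the c r rows lost at the top, and the rounding of the
   columns into blocks, cost at most n / (2 Q) edges. *)
Definition grid_height := 2 * Q * s * c * r + c * r + 1.

Let M := grid_height.
Let C := (n - i0) %/ M.
Let G := i0 * special_blocks r C * grid_rows i0 b r M +
  b * plain_blocks r C * grid_rows i0 b r M.

Lemma grid_height_ge : c * r <= M.
Proof. rewrite /M /grid_height; lia. Qed.

Lemma blocks_lower : s * ((C - r) * grid_rows i0 b r M) <= r * r.-1 * G.
Proof.
have blocks_ge p : 0 < p -> p <= r -> C - r <= p * (C %/ p).
  move=> p0 pr; have := ltn_ceil C p0; rewrite mulSn [_ * p]mulnC.
  by move: (p * (C %/ p)) => a; lia.
have h1 := blocks_ge r.-1 (ltac:(lia)) (leq_pred r).
have h2 := blocks_ge r (ltnW r_gt1) (leqnn r).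
rewrite /G /special_blocks /plain_blocks /s mulnDl.
set R := grid_rows i0 b r M; set A1 := C %/ r.-1; set A2 := C %/ r.
have -> : r * r.-1 * (i0 * A1 * R + b * A2 * R) =
    r * i0 * (r.-1 * A1 * R) + r.-1 * b * (r * A2 * R) by ring.
by apply: leq_add; rewrite leq_mul2l leq_mul2r ?h1 ?h2 !orbT.
Qed.

Lemma rows_lower : n - i0 <= (C - r) * grid_rows i0 b r M + M + r * M + C * (c * r).
Proof.
have M0 : 0 < M by rewrite /M /grid_height addn1.
have := ltn_ceil (n - i0) M0; rewrite -/C mulSn.
have := grid_height_ge; rewrite /grid_rows -/M.
move: (c * r) C M => cr C' M' crM; have [p ->] : exists p, M' = p + cr by exists (M' - cr); lia.
rewrite addnK; case: (leqP C' r) => [Cr|/ltnW rC].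
  by have := leq_mul2r (p + cr) C' r; rewrite Cr orbT; lia.
have [t ->] : exists t, C' = r + t by exists (C' - r); lia.
rewrite addKn; nia.
Qed.

Lemma height_lower : 2 * Q * (s * (C * (c * r))) <= n.
Proof.
have CM : C * M <= n by rewrite (leq_trans (leq_divM _ _)) ?leq_subr.
have -> : 2 * Q * (s * (C * (c * r))) = C * (2 * Q * s * c * r) by ring.
by apply: leq_trans CM; rewrite leq_mul2l /M /grid_height -addnA leq_addr orbT.
Qed.

Lemma scaled_term_le_grid : i0 <= n -> 2 * Q * (s * (M + r * M) + i0 * i0) <= n ->
  Q * scaled_term r n d i0 <= Q * (r * r.-1) * G + n.
Proof.
move=> i0n nbig.
have T : scaled_term r n d i0 = s * (n - i0) + i0 * i0.-1 by rewrite /scaled_term /s; ring.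
rewrite T; have := blocks_lower; have := rows_lower; have := height_lower.
clearbody G C M; move: (grid_rows i0 b r M) => R hZ hrows hblocks.
have h1 : s * (n - i0) <= r * r.-1 * G + s * (M + r * M) + s * (C * (c * r)).
  apply: leq_trans (_ : s * ((C - r) * R + M + r * M + C * (c * r)) <= _).
    by rewrite leq_mul2l hrows orbT.
  by rewrite !mulnDr -!addnA leq_add2r hblocks.
have h3 : i0 * i0.-1 <= i0 * i0 by rewrite leq_mul2l leq_pred orbT.
rewrite -mulnA; move: h1 hZ h3 nbig.
move: (r * r.-1 * G) (s * (M + r * M)) (s * (C * (c * r))) => X Y Z h1 hZ h3 nbig.
apply: leq_trans (_ : Q * (X + (Y + i0 * i0) + Z) <= _); last by rewrite !mulnDr; lia.
by rewrite leq_mul2l; apply/orP; right; lia.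
Qed.

End GridCount.

Local Open Scope ring_scope.

Lemma star_term_scaled k r n (d : 'I_k -> nat) (i : 'I_k) : (1 < r)%N -> (i <= n)%N ->
  star_term r n d i = (scaled_term r n (d i) i)%:R / (r * r.-1)%:R.
Proof.
move=> r_gt1 ilen; rewrite /star_term /scaled_term.
have bin2E m : ('C(m, 2))%:R = (m * m.-1)%:R / 2 :> rat.
  have e : (m * m.-1 = 'C(m, 2) * 2)%N by rewrite [RHS]mulnC -mul_bin_diag bin1.
  by rewrite e natrM mulfK.
have r0 : r%:R != 0 :> rat by rewrite pnatr_eq0 -lt0n ltnW.
have r10 : (r.-1)%:R != 0 :> rat by rewrite pnatr_eq0 -lt0n; lia.
rewrite !bin2E !natrD !natrM natrB //; field.
by rewrite r0 r10.
Qed.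

Lemma exists_nat_mul_ge1 (eps : rat) : 0 < eps -> exists2 Q : nat, (0 < Q)%N & 1 <= Q%:R * eps.
Proof.
move=> eps_gt0; exists `|denq eps|%N; first by rewrite absz_gt0 denq_neq0.
have den_ge0 : 0 <= denq eps by rewrite ltW ?denq_gt0.
rewrite natr_absz ger0_norm // -{2}(divq_num_den eps) mulrC divfK ?intr_eq0 ?denq_neq0 //.
by rewrite ler1z -gtz0_ge1 numq_gt0.
Qed.

Section MainBounds.
Variables (k r : nat) (d : 'I_k.+1 -> nat).
Hypotheses (r_gt1 : (1 < r)%N) (d_gt0 : forall i, (0 < d i)%N)
  (d_mono : forall i j : 'I_k.+1, (i <= j)%N -> (d j <= d i)%N).

Let dn j := d (inord j).

Let dn_mono i j : (i <= j)%N -> (j < k.+1)%N -> (dn j <= dn i)%N.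
Proof. by move=> ij jk; apply: d_mono; rewrite /= !inordK //; lia. Qed.

Lemma ex_lin_upper n : (upper_threshold r k.+1 dn <= n)%N ->
  (ex_lin r n (star_forest r d))%:R <= star_bound r n d.
Proof.
move=> nbig; rewrite /ex_lin; elim/big_ind: _ => [|x y hx hy|H /and3P [unH linH free]].
- exact: bigmax_ge_id.
- by rewrite /maxn; case: ifP.
have nopack : ~ star_packing H setT (mkseq dn k.+1).
  by move/(star_packing_contains_copy linH unH d_gt0); apply/negP.
have [|l lk le] := scaled_card_edges_le linH unH r_gt1 dn_mono nopack; first by rewrite card_ord.
apply: le_trans (le_bigmax _ _ (inord l)).
have ln : (l <= n)%N.
  by apply: leq_trans nbig; rewrite /upper_threshold /=; lia.
rewrite star_term_scaled ?inordK // ler_pdivlMr ?ltr0n ?muln_gt0; last by apply/andP; split; lia.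
by rewrite -natrM ler_nat mulnC; rewrite card_ord in le.
Qed.

Lemma ex_lin_lower_scaled (i : 'I_k.+1) Q : exists N, forall n, (N <= n)%N ->
  (Q * scaled_term r n (d i) i <= Q * (r * r.-1) * ex_lin r n (star_forest r d) + n)%N.
Proof.
set b := (d i).-1; set M := grid_height r i (d i) Q.
exists (2 * Q * ((r * i + r.-1 * b) * (M + r * M) + i * i) + i.+1)%N => -[|n] nbig.
  by rewrite addnS in nbig.
set C := ((n.+1 - i) %/ M)%N.
have i_le : (i <= n.+1)%N by apply: leq_trans nbig; rewrite addnS ltnW // ltnS leq_addl.
have room : (i + C * M <= n.+1)%N by rewrite -(subnKC i_le) leq_add2l leq_divM.
have Mbig : ((i + b) * r <= M)%N by apply: grid_height_ge.
set G := grid_hypergraph n i b r M C.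
have admissible : [&& uniform r G, Defs.linear G & ~~ contains_copy (star_forest r d) G].
  rewrite grid_hypergraph_uniform ?grid_hypergraph_linear //=.
  apply: (star_forest_free (U := special_vertices n i) (i0 := i)) => //.
    exact: card_special_vertices r_gt1 room Mbig.
  exact: grid_deg_avoiding_special r_gt1 room Mbig.
have GE : (#|G| <= ex_lin r n.+1 (star_forest r d))%N by apply: leq_bigmax_cond.
apply: leq_trans (scaled_term_le_grid r_gt1 i_le (leq_trans (leq_addr _ _) nbig)) _.
by rewrite -(card_grid_hypergraph r_gt1 room Mbig) leq_add2r leq_mul2l GE orbT.
Qed.

Lemma ex_lin_lower_term (i : 'I_k.+1) (eps : rat) : 0 < eps -> exists N, forall n, (N <= n)%N ->
  star_term r n d i - eps * n%:R <= (ex_lin r n (star_forest r d))%:R.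
Proof.
move=> eps_gt0; have [Q Q_gt0 Qeps] := exists_nat_mul_ge1 eps_gt0.
have [N Nbig] := ex_lin_lower_scaled i Q.
exists (N + i)%N => n nbig; have := Nbig n (leq_trans (leq_addr _ _) nbig).
rewrite star_term_scaled //; last by lia.
set T := scaled_term _ _ _ _; set E := ex_lin _ _ _; set R := (r * r.-1)%N.
have R_gt0 : (0 < R)%N by rewrite muln_gt0; lia.
clearbody T E R.
rewrite -(ler_nat rat) !natrD !natrM => TE.
have Qp : 0 < (Q%:R : rat) by rewrite ltr0n.
have Rp : 1 <= (R%:R : rat) by rewrite ler1n.
have np : 0 <= (n%:R : rat) by rewrite ler0n.
set t := (T%:R / R%:R : rat).
have Tt : T%:R = t * R%:R by rewrite /t divfK // pnatr_eq0 -lt0n.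
rewrite Tt in TE.
have key : Q%:R * (t - E%:R) <= n%:R.
  have [u0|u0] := lerP (t - E%:R) 0; first by nra.
  have : Q%:R * (t - E%:R) <= Q%:R * R%:R * (t - E%:R).
    by rewrite -mulrA ler_pM2l // ler_peMl // ltW.
  lra.
nra.
Qed.

End MainBounds.

Theorem theorem1p7 (k r : nat) (d : 'I_k -> nat) :
  (1 <= k)%N -> (2 <= r)%N ->
  (forall i, (0 < d i)%N) ->
  (forall i j : 'I_k, (i <= j)%N -> (d j <= d i)%N) ->
  (* upper bound for all sufficiently large n *)
  (exists N : nat, forall n : nat, (N <= n)%N ->
     (ex_lin r n (star_forest r d))%:R <= star_bound r n d)
  /\
  (* asymptotic sharpness: ex^lin >= bound - o(n) *)
  (forall eps : rat, 0 < eps -> exists N : nat, forall n : nat, (N <= n)%N ->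
     star_bound r n d - eps * n%:R <= (ex_lin r n (star_forest r d))%:R).
Proof.
case: k d => [//|k] d _ r_gt1 d_gt0 d_mono; split.
  by exists (upper_threshold r k.+1 (fun j => d (inord j))) => n; apply: ex_lin_upper.
move=> eps eps_gt0.
have /fin_all_exists [N Nbig] := fun i => ex_lin_lower_term r_gt1 d_gt0 d_mono i eps_gt0.
exists (\max_i N i)%N => n nbig; rewrite lerBlDr.
apply: bigmax_le => [|i _]; first by rewrite addr_ge0 ?mulr_ge0 ?(ltW eps_gt0).
by rewrite -lerBlDr; apply: Nbig; apply: leq_trans nbig; exact: leq_bigmax.
Qed.
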